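(* Let $G$ be a graph with edge set $E$, let $C\subseteq E$ and let $k\ge1$ be an integer. Then $C$ is a circuit of $M_k(G)$ if and only if $\Delta G\langle C\rangle=k$ and $G\langle C\rangle$ is a cacti-graph, i.e. $G\langle C\rangle$ has no leaves and every component of $G\langle C\rangle$ has at least two cycles.
   Context: Graphs are finite, may have loops and parallel edges. A leaf is a vertex incident to exactly one edge, which is not a loop. $\Delta H=|E(H)|-|V(H)|$. For $X\subseteq E$, $G\langle X\rangle$ is the subgraph with edge set $X$ and vertex set the vertices incident to edges of $X$. A cacti-graph is a graph with no isolated vertices, no leaves, and no component that is a cycle. For an integer $k\ge0$, the $k$-circular matroid $M_k(G)$ is the matroid on $E$ whose family of circuits ${\cal C}_k(G)$ is the set of inclusion-minimal members of $\{C\subseteq E: C\neq\emptyset,\ |C|=|V(G\langle C\rangle)|+k\}$ (this family is the circuit family of a matroid). *)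

(* A graph (loops and parallel edges allowed) is given by a
   finite vertex type V, a finite edge type E and an endpoint map
   ends : E -> V * V (the pair is read as unordered; a loop has equal ends). *)
From mathcomp Require Import all_boot all_order all_algebra.
Set Implicit Arguments. Unset Strict Implicit. Unset Printing Implicit Defensive.

Section Graphs.
Variables (V E : finType) (ends : E -> V * V).

Definition inc (e : E) (v : V) : bool := ((ends e).1 == v) || ((ends e).2 == v).
Definition is_loop (e : E) : bool := (ends e).1 == (ends e).2.

Definition VX (X : {set E}) : {set V} := [set v | [exists e in X, inc e v]].

Definition DeltaX (X : {set E}) : int := (#|X|%:Z - #|VX X|%:Z)%R.

Definition kdep (k : nat) (C : {set E}) : bool :=
  (C != set0) && (#|C| == #|VX C| + k).
Definition kcircuit (k : nat) (C : {set E}) : bool := minset (kdep k) C.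

Definition leafX (X : {set E}) (v : V) : Prop :=
  exists2 e, e \in X & [/\ inc e v, ~~ is_loop e &
     (forall e', e' \in X -> inc e' v -> e' = e)].

Definition adjX (X : {set E}) : rel V :=
  fun u v => [exists e in X, (ends e == (u, v)) || (ends e == (v, u))].
Definition compX (X : {set E}) (v : V) : {set V} := [set u | connect (adjX X) v u].

Definition degX (X : {set E}) (v : V) : nat :=
  (\sum_(e in X) (((ends e).1 == v) + ((ends e).2 == v)))%N.

(* the component of G<X> containing v is a cycle: a connected 2-regular graph *)
Definition comp_is_cycle (X : {set E}) (v : V) : Prop :=
  forall u, u \in compX X v -> degX X u = 2%N.

Definition cacti (X : {set E}) : Prop :=
  [/\ forall v, v \in VX X -> exists2 e, e \in X & inc e v,
       forall v, v \in VX X -> ~ leafX X v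
     & forall v, v \in VX X -> ~ comp_is_cycle X v].

End Graphs.

From mathcomp Require Import all_boot all_order all_algebra.
From mathcomp Require Import zify.
Set Implicit Arguments. Unset Strict Implicit. Unset Printing Implicit Defensive.

(* Both directions count endpoints.  If a proper subset B of a k-circuit C had
   Delta G<B> >= k, a minimal such subset of B would be k-dependent; deleting
   the edge at a leaf, or the edges of a cycle component, removes at least as
   many vertices as edges, so a k-circuit has neither.  Conversely, if C has no
   leaves and a proper k-dependent subset B, the edges D = C \ B and the
   vertices N of G<C> missing from G<B> are equinumerous; every vertex of N has
   degree >= 2 and every edge of D has at most two ends in N, so by the
   handshake lemma all these inequalities are tight and N spans a union of
   cycle components of G<C>. *)

Lemma sum_leq_eq (I : finType) (P : pred I) (F G : I -> nat) :
  (forall i, P i -> F i <= G i) ->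
  \sum_(i | P i) G i <= \sum_(i | P i) F i -> forall i, P i -> F i = G i.
Proof.
move=> leFG leGF i Pi.
have [leFG_sum] := leqif_sum (fun j Pj => leqif_eq (leFG j Pj)).
rewrite eqn_leq leFG_sum leGF => /esym/forall_inP/(_ i Pi).
exact: eqP.
Qed.

Section Graph.
Variables (V E : finType) (ends : E -> V * V).

Local Notation inc := (inc ends).
Local Notation VX := (VX ends).
Local Notation degX := (degX ends).
Local Notation leafX := (leafX ends).
Local Notation compX := (compX ends).
Local Notation adjX := (adjX ends).

Definition ends_in (S : {set V}) (e : E) : nat :=
  ((ends e).1 \in S) + ((ends e).2 \in S).

Lemma ends_in_le2 S e : ends_in S e <= 2.
Proof. by rewrite /ends_in; case: (_ \in S); case: (_ \in S). Qed.

Lemma ends_in_eq2 S e : ends_in S e = 2 -> ((ends e).1 \in S) && ((ends e).2 \in S).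
Proof. by rewrite /ends_in; case: (_ \in S); case: (_ \in S). Qed.

Definition edge_closed (X : {set E}) (N : {set V}) :=
  forall f w, f \in X -> w \in N -> inc f w ->
    ((ends f).1 \in N) && ((ends f).2 \in N).

Lemma DeltaX_eq_nat (C : {set E}) (k : nat) :
  DeltaX ends C = Posz k <-> #|C| = #|VX C| + k.
Proof. by rewrite /DeltaX; split; lia. Qed.

Lemma inc_ends1 e : inc e (ends e).1.
Proof. by rewrite /inc eqxx. Qed.

Lemma inc_ends2 e : inc e (ends e).2.
Proof. by rewrite /inc eqxx orbT. Qed.

Lemma mem_VX (X : {set E}) e v : e \in X -> inc e v -> v \in VX X.
Proof. by move=> eX ev; rewrite inE; apply/existsP; exists e; rewrite eX. Qed.

Lemma notin_VX (X : {set E}) v : (forall f, f \in X -> ~~ inc f v) ->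
  v \notin VX X.
Proof.
move=> notinc; rewrite inE negb_exists; apply/forallP => f.
by apply/andP => -[fX fv]; move: fv; apply/negP/notinc.
Qed.

Lemma VXS (B C : {set E}) : B \subset C -> VX B \subset VX C.
Proof.
move=> sBC; apply/subsetP => v; rewrite !inE => /existsP[e /andP[eB ev]].
by apply/existsP; exists e; rewrite (subsetP sBC).
Qed.

Lemma VX_degX_gt0 (X : {set E}) u : 0 < degX X u -> u \in VX X.
Proof.
apply: contraTT => uX; rewrite /degX big1 // => e eX.
have : ~~ inc e u by apply: contraNN uX; apply: mem_VX.
by rewrite /inc negb_or => /andP[/negbTE -> /negbTE ->].
Qed.

Lemma handshake (X : {set E}) (S : {set V}) :
  \sum_(u in S) degX X u = \sum_(e in X) ends_in S e.
Proof.
have sum_eq u : \sum_(w in S) (u == w) = (u \in S).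
  rewrite (big_mkcond (fun w => w \in S)) (bigD1 u) //= eqxx big1 ?addn0.
    by case: (u \in S).
  by move=> w; rewrite eq_sym => /negbTE ->; case: ifP.
rewrite /degX exchange_big; apply: eq_bigr => e _.
by rewrite big_split /= !sum_eq.
Qed.

Lemma sum_mem_card (C D : {set E}) : D \subset C ->
  \sum_(e in C) (e \in D) = #|D|.
Proof.
move=> sDC; rewrite -sum1_card (big_setID D) /= (setIidPr sDC).
rewrite [X in _ + X]big1 ?addn0; last by move=> e; rewrite inE => /andP[/negbTE ->].
by apply: eq_bigr => e ->.
Qed.

Lemma degX_ge2 (X : {set E}) u : u \in VX X -> ~ leafX X u -> 2 <= degX X u.
Proof.
rewrite inE => /existsP[e /andP[eX eu]] notleaf.
have deg_split f : f \in X -> f != e ->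
    ((ends e).1 == u) + ((ends e).2 == u) + (((ends f).1 == u) + ((ends f).2 == u))
    <= degX X u.
  move=> fX fe; rewrite /degX (bigD1 e) //= leq_add2l.
  by rewrite (bigD1 f) /= ?fX ?fe //= leq_addr.
rewrite leqNgt; apply/negP => deg_lt2; apply: notleaf; exists e => //; split=> //.
  apply/negP => loop; move: deg_lt2; rewrite /degX (bigD1 e) //=.
  move: eu loop; rewrite /inc /is_loop.
  by case: (ends e) => a b /= /orP[] /eqP -> /eqP ->; rewrite eqxx.
move=> f fX fu; apply/eqP; apply: contraTT deg_lt2 => /(deg_split f fX).
move: eu fu; rewrite /inc -leqNgt; case: (ends e) => a b; case: (ends f) => c d /=.
by case: (a == u); case: (b == u); case: (c == u); case: (d == u) => //=; lia.
Qed.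

Lemma connect_closed (X : {set E}) (N : {set V}) : edge_closed X N ->
  forall u w, u \in N -> connect (adjX X) u w -> w \in N.
Proof.
move=> closedN u w uN /connectP[p pth ->] {w}.
elim: p u uN pth => //= x p IH u uN /andP[/existsP[f /andP[fX fux]] pth].
apply: IH pth; have := closedN f u fX uN; rewrite /inc.
by case/orP: fux => /eqP -> /=; rewrite eqxx ?orbT => /(_ isT) /andP[].
Qed.

Lemma compX_closed (X : {set E}) v : edge_closed X (compX X v).
Proof.
move=> f w fX; rewrite /inc !inE; case def_f: (ends f) => [a b] /= vw.
have ab : adjX X a b by apply/existsP; exists f; rewrite fX def_f eqxx.
have ba : adjX X b a by apply/existsP; exists f; rewrite fX def_f eqxx orbT.
case/orP => /eqP wf; subst w; rewrite vw /=.
  exact: connect_trans vw (connect1 ab).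
by rewrite andbT; apply: connect_trans vw (connect1 ba).
Qed.

Section Circuits.
Variable k : nat.
Hypothesis k_gt0 : 0 < k.

Lemma kdep_subset (B : {set E}) : #|VX B| + k <= #|B| ->
  exists2 A : {set E}, A \subset B & kdep ends k A.
Proof.
move=> dense.
have [A /minsetP[denseA minA] sAB] :=
  minset_exists (P := fun A : {set E} => #|VX A| + k <= #|A|) dense.
exists A => //; rewrite /kdep -card_gt0 eqn_leq denseA andbT.
have /card_gt0P[e eA] : 0 < #|A| by lia.
apply/andP; split; first by apply/card_gt0P; exists e.
rewrite leqNgt; apply/negP => ltA.
have sV : #|VX (A :\ e)| <= #|VX A| by apply/subset_leq_card/VXS/subsetDl.
have cAe : #|A :\ e| = #|A| - 1 by rewrite (cardsD1 e A) eA; lia.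
have /esym/setP/(_ e) := minA (A :\ e) ltac:(lia) (subsetDl _ _).
by rewrite !inE eqxx eA.
Qed.

Lemma kcircuit_proper (B C : {set E}) : kcircuit ends k C -> B \proper C ->
  #|B| < #|VX B| + k.
Proof.
case/minsetP=> _ minC; rewrite properEneq => /andP[nBC sBC].
rewrite ltnNge; apply/negP => /kdep_subset[A sAB kA].
have eAC := minC A kA (subset_trans sAB sBC).
by rewrite eqEsubset sBC -eAC sAB in nBC.
Qed.

Lemma kcircuit_remove (C D : {set E}) : kcircuit ends k C ->
  D \subset C -> D != set0 -> #|VX C :\: VX (C :\: D)| < #|D|.
Proof.
move=> kC sDC; rewrite -card_gt0 => D_gt0.
have [/andP[_ /eqP cardC] _] := minsetP kC.
have sV : VX (C :\: D) \subset VX C by apply/VXS/subsetDl.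
have leDC := subset_leq_card sDC; have leV := subset_leq_card sV.
have : C :\: D \proper C.
  by rewrite properEcard subsetDl cardsD (setIidPr sDC) /=; lia.
move/(kcircuit_proper kC); rewrite cardsD (setIidPr sDC) cardsD (setIidPr sV).
lia.
Qed.

Lemma kcircuit_no_leaf (C : {set E}) v : kcircuit ends k C -> ~ leafX C v.
Proof.
move=> kC [e eC [ev _ uniq_e]].
have vN : v \in VX C :\: VX (C :\ e).
  rewrite in_setD (mem_VX eC ev) andbT; apply: notin_VX => f.
  rewrite in_setD1 => /andP[fe fC]; apply: contraL fe => fv.
  by rewrite (uniq_e f fC fv) eqxx.
have := kcircuit_remove kC (D := [set e]); rewrite sub1set eC -card_gt0 cards1.
move=> /(_ isT isT); rewrite ltnS leqn0 cards_eq0 => /eqP N0.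
by rewrite N0 inE in vN.
Qed.

Lemma kcircuit_no_cycle_comp (C : {set E}) v : kcircuit ends k C ->
  ~ comp_is_cycle ends C v.
Proof.
move=> kC cyc; set K := compX C v; set D := [set e in C | (ends e).1 \in K].
have inD e : (e \in D) = (e \in C) && ((ends e).1 \in K) by rewrite inE.
have sDC : D \subset C by apply/subsetP => e; rewrite inD => /andP[].
have ends_inK e : e \in C -> ends_in K e = 2 * (e \in D).
  move=> eC; rewrite /ends_in inD eC /=.
  case K1: ((ends e).1 \in K).
    by have /andP[_ ->] := compX_closed eC K1 (inc_ends1 e).
  case K2: ((ends e).2 \in K) => //.
  by have /andP[] := compX_closed eC K2 (inc_ends2 e); rewrite K1.
have cardK : #|K| = #|D|.
  have := handshake C K; rewrite (eq_bigr _ cyc) (eq_bigr _ ends_inK).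
  by rewrite sum_nat_const -big_distrr /= sum_mem_card // -/K; lia.
have sKV : K \subset VX C :\: VX (C :\: D).
  apply/subsetP => u uK; have uC : u \in VX C by apply: VX_degX_gt0; rewrite cyc.
  rewrite in_setD uC andbT; apply: notin_VX => f.
  rewrite in_setD => /andP[fD fC]; apply: contra fD => fu.
  by have /andP[f1 _] := compX_closed fC uK fu; rewrite inD fC f1.
have D0 : D != set0.
  by rewrite -card_gt0 -cardK card_gt0; apply/set0Pn; exists v; rewrite inE.
by have := kcircuit_remove kC sDC D0; have := subset_leq_card sKV; lia.
Qed.

Lemma balanced_squeeze (C B : {set E}) : B \subset C ->
  #|C :\: B| = #|VX C :\: VX B| -> (forall v, v \in VX C -> ~ leafX C v) ->
  (forall u, u \in VX C :\: VX B -> degX C u = 2) /\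
  (forall e, e \in C -> ends_in (VX C :\: VX B) e = 2 * (e \in C :\: B)).
Proof.
move=> sBC cardD noleaf; set N := VX C :\: VX B; set D := C :\: B.
have ends_inN e : e \in C -> ends_in N e <= 2 * (e \in D).
  move=> eC; rewrite in_setD eC andbT.
  case eB: (e \in B); last by rewrite muln1 ends_in_le2.
  by rewrite /ends_in !in_setD (mem_VX eB (inc_ends1 e)) (mem_VX eB (inc_ends2 e)).
have deg2 u : u \in N -> 2 <= degX C u.
  by rewrite in_setD => /andP[_ uC]; apply: degX_ge2 uC (noleaf u uC).
have sum_eq : \sum_(e in C) 2 * (e \in D) = \sum_(u in N) 2.
  by rewrite -big_distrr /= sum_mem_card ?subsetDl // sum_nat_const cardD mulnC.
split.
  move=> u uN; apply/esym; apply: (sum_leq_eq deg2) uN.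
  by rewrite handshake -sum_eq; apply: leq_sum ends_inN.
move=> e eC; apply: (sum_leq_eq ends_inN) eC.
by rewrite sum_eq -handshake; apply: leq_sum deg2.
Qed.

Lemma kcircuit_of_cacti (C : {set E}) : #|C| = #|VX C| + k ->
    (forall v, v \in VX C -> ~ leafX C v) ->
    (forall v, v \in VX C -> ~ comp_is_cycle ends C v) ->
  kcircuit ends k C.
Proof.
move=> cardC noleaf nocycle; apply/minsetP; split.
  by rewrite /kdep cardC eqxx andbT -card_gt0 cardC; lia.
move=> B /andP[_ /eqP cardB] sBC; apply/eqP; rewrite eqEsubset sBC -setD_eq0.
apply/negPn/set0Pn => -[e eD]; have sV := VXS sBC.
have cardD : #|C :\: B| = #|VX C :\: VX B|.
  rewrite !cardsD (setIidPr sBC) (setIidPr sV).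
  by have := subset_leq_card sBC; have := subset_leq_card sV; lia.
have [deg2 ends_inN] := balanced_squeeze sBC cardD noleaf.
set N := VX C :\: VX B in deg2 ends_inN.
have eC : e \in C by move: eD; rewrite in_setD => /andP[].
have closedN : edge_closed C N.
  move=> f w fC wN fw; have fD : f \in C :\: B.
    rewrite in_setD fC andbT; apply: contraL wN => fB.
    by rewrite in_setD (mem_VX fB fw).
  by apply: ends_in_eq2; rewrite ends_inN // fD.
have /andP[N1 _] : ((ends e).1 \in N) && ((ends e).2 \in N).
  by apply: ends_in_eq2; rewrite ends_inN // eD.
apply: (nocycle _ (mem_VX eC (inc_ends1 e))) => w.
by rewrite inE => /(connect_closed closedN N1) /deg2.
Qed.

End Circuits.
End Graph.

Theorem mainTheorem8 (V E : finType) (ends : E -> V * V) (C : {set E}) (k : nat) :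
  (1 <= k)%N ->
  (kcircuit ends k C <-> (DeltaX ends C = Posz k /\ cacti ends C)).
Proof.
move=> k_gt0; rewrite DeltaX_eq_nat; split.
  move=> kC; have [/andP[_ /eqP cardC] _] := minsetP kC.
  split; first exact: cardC.
  split=> v.
  - by rewrite inE => /existsP[e /andP[eC ev]]; exists e.
  - by move=> _; apply: kcircuit_no_leaf kC.
  - by move=> _; apply: kcircuit_no_cycle_comp kC.
case=> cardC [_ noleaf nocycle].
exact: (kcircuit_of_cacti k_gt0 cardC noleaf nocycle).
Qed.
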